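(* $\{\omega^2, (\omega^2)^\star\} \leq_c \{\omega^3, (\omega^3)^\star\}$.
   Context: Structures have domains contained in $\omega$. For countable structures $\mathcal{A},\mathcal{B}$, the class $\{\mathcal{A},\mathcal{B}\}$ denotes the class of all structures (with domain $\subseteq\omega$) isomorphic to $\mathcal{A}$ or to $\mathcal{B}$. Linear orders are in the language $\{<\}$; $L^\star$ is the reverse of a linear order $L$; $\omega^2$, $\omega^3$ are ordinal order types. An enumeration operator $\Gamma$ is a c.e. set of pairs $(\alpha,\varphi)$ with $\alpha$ a finite set of basic (atomic or negated atomic) sentences of the input language with constants from $\omega$ and $\varphi$ a basic sentence of the output language with constants from $\omega$; $\Gamma(X)=\{\varphi : (\alpha,\varphi)\in\Gamma,\ \alpha\subseteq X\}$. $\Gamma$ is a computable embedding of $\mathcal{K}_0$ into $\mathcal{K}_1$ ($\mathcal{K}_0\leq_c\mathcal{K}_1$) if for every $\mathcal{A}\in\mathcal{K}_0$, $\Gamma$ applied to the atomic diagram of $\mathcal{A}$ is the atomic diagram of a structure $\Gamma(\mathcal{A})\in\mathcal{K}_1$, and for all $\mathcal{A},\mathcal{B}\in\mathcal{K}_0$, $\mathcal{A}\cong\mathcal{B}$ iff $\Gamma(\mathcal{A})\cong\Gamma(\mathcal{B})$. *)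

From Stdlib Require Import Arith List.
Import ListNotations.

(* Primitive recursive functions (untyped syntax; missing arguments are
   read as 0), used to define c.e. sets via the Kleene normal form:
   X is c.e. iff X = { x | exists n, f(x, n) = 0 } for some primitive
   recursive f. *)
Inductive PR : Type :=
| PZero : PR
| PSucc : PR
| PProj : nat -> PR
| PComp : PR -> list PR -> PR
| PRec  : PR -> PR -> PR.

Fixpoint pr_eval (f : PR) (xs : list nat) {struct f} : nat :=
  match f with
  | PZero => 0
  | PSucc => S (hd 0 xs)
  | PProj i => nth i xs 0
  | PComp g hs =>
      pr_eval g ((fix ev (l : list PR) : list nat :=
                    match l with
                    | nil => nil
                    | h :: t => pr_eval h xs :: ev t
                    end) hs)
  | PRec g h =>
      let ys := tl xs in
      (fix r (n : nat) : nat :=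
         match n with
         | 0 => pr_eval g ys
         | S m => pr_eval h (m :: r m :: ys)
         end) (hd 0 xs)
  end.

Definition ce_set (X : nat -> Prop) : Prop :=
  exists f : PR, forall x, X x <-> exists n, pr_eval f [x; n] = 0.

Definition cpair (a b : nat) : nat := (a + b) * (a + b + 1) / 2 + b.

(* Basic sentences of the language {<} (with equality) with constants
   from omega. *)
Inductive atom : Type :=
| AEq : nat -> nat -> atom
| ALt : nat -> nat -> atom.

Inductive basic : Type :=
| BPos : atom -> basic
| BNeg : atom -> basic.

Definition code_atom (t : atom) : nat :=
  match t with
  | AEq a b => cpair 0 (cpair a b)
  | ALt a b => cpair 1 (cpair a b)
  end.

Definition code_basic (s : basic) : nat :=
  match s with
  | BPos t => cpair 0 (code_atom t)
  | BNeg t => cpair 1 (code_atom t)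
  end.

Fixpoint code_list (l : list basic) : nat :=
  match l with
  | nil => 0
  | s :: t => S (cpair (code_basic s) (code_list t))
  end.

Definition code_pair (alpha : list basic) (phi : basic) : nat :=
  cpair (code_list alpha) (code_basic phi).

(* Enumeration operators: a set of pairs (alpha, phi), alpha a finite
   set (given as a list) of basic sentences, phi a basic sentence. *)
Definition enum_op := list basic -> basic -> Prop.

Definition is_ce_op (G : enum_op) : Prop :=
  ce_set (fun x => exists alpha phi, x = code_pair alpha phi /\ G alpha phi).

Definition apply_op (G : enum_op) (X : basic -> Prop) : basic -> Prop :=
  fun phi => exists alpha, G alpha phi /\ (forall s, In s alpha -> X s).

(* Structures in the language {<} with domain contained in omega. *)
Record Str : Type := { sdom : nat -> Prop; slt : nat -> nat -> Prop }.

Definition holds (A : Str) (t : atom) : Prop :=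
  match t with
  | AEq a b => a = b
  | ALt a b => slt A a b
  end.

Definition consts (t : atom) : nat * nat :=
  match t with AEq a b => (a, b) | ALt a b => (a, b) end.

Definition diag (A : Str) (s : basic) : Prop :=
  match s with
  | BPos t => sdom A (fst (consts t)) /\ sdom A (snd (consts t)) /\ holds A t
  | BNeg t => sdom A (fst (consts t)) /\ sdom A (snd (consts t)) /\ ~ holds A t
  end.

Definition str_iso (A B : Str) : Prop :=
  exists f : nat -> nat,
    (forall x, sdom A x -> sdom B (f x)) /\
    (forall y, sdom B y -> exists x, sdom A x /\ f x = y) /\
    (forall x y, sdom A x -> sdom A y -> f x = f y -> x = y) /\
    (forall x y, sdom A x -> sdom A y -> (slt A x y <-> slt B (f x) (f y))).

Record OrdT : Type := { car : Type; olt : car -> car -> Prop }.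

Definition iso_to (A : Str) (L : OrdT) : Prop :=
  exists f : nat -> car L,
    (forall y, exists x, sdom A x /\ f x = y) /\
    (forall x y, sdom A x -> sdom A y -> f x = f y -> x = y) /\
    (forall x y, sdom A x -> sdom A y -> (slt A x y <-> olt L (f x) (f y))).

Definition class2 (L1 L2 : OrdT) (A : Str) : Prop := iso_to A L1 \/ iso_to A L2.

Definition reverse (L : OrdT) : OrdT := {| car := car L; olt := fun x y => olt L y x |}.

(* omega^2 = omega copies of omega: pairs ordered lexicographically,
   first coordinate most significant. *)
Definition omega2 : OrdT :=
  {| car := nat * nat;
     olt := fun p q => fst p < fst q \/ (fst p = fst q /\ snd p < snd q) |}.

(* omega^3: triples (i,(j,k)) ordered lexicographically. *)
Definition omega3 : OrdT :=
  {| car := nat * (nat * nat);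
     olt := fun p q => fst p < fst q \/
              (fst p = fst q /\ olt omega2 (snd p) (snd q)) |}.

Definition comp_embeds (K0 K1 : Str -> Prop) : Prop :=
  exists G : enum_op, is_ce_op G /\
    (forall A, K0 A -> exists C, K1 C /\
        (forall s, apply_op G (diag A) s <-> diag C s)) /\
    (forall A B C D, K0 A -> K0 B ->
        (forall s, apply_op G (diag A) s <-> diag C s) ->
        (forall s, apply_op G (diag B) s <-> diag D s) ->
        (str_iso A B <-> str_iso C D)).

From Stdlib Require Import Arith List Lia Classical ClassicalEpsilon FinFun.
Import ListNotations.

(* The operator sends a linear order [A] to the set of codes [cpair a b] of
   elements of [A] such that [b] lies strictly between two elements whose codes
   are below [a], ordered lexicographically.  Membership and order in the image
   are witnessed by finitely many atomic facts of [A], and the condition on [b]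
   mentions only the finite set of codes below [a], so it is symmetric under
   reversal: the image of [A*] is the reverse of the image of [A].
   If [A] is omega^2, the fibre over [a] is a bounded interval of omega^2, and
   within each copy of omega these intervals are infinite infinitely often.
   Merging the finite pieces with the next infinite one shows that each copy of
   omega contributes omega^2, so the image is omega copies of omega^2, i.e.
   omega^3.  As omega^2 and omega^3 are not isomorphic to their reverses, the
   operator preserves and reflects isomorphism on the class. *)

(** * Primitive recursive pairing *)

Fixpoint tri (s : nat) : nat := match s with 0 => 0 | S m => tri m + S m end.

Lemma double_tri s : 2 * tri s = s * (s + 1).
Proof. induction s; simpl; nia. Qed.

Lemma cpair_tri a b : cpair a b = tri (a + b) + b.
Proof.
  unfold cpair. rewrite <- double_tri, Nat.mul_comm, Nat.div_mul; lia.
Qed.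

Lemma tri_le_mono a b : a <= b -> tri a <= tri b.
Proof. induction 1; simpl; lia. Qed.

Lemma le_tri s : s <= tri s.
Proof. induction s; simpl; lia. Qed.

(* [1 - (tri s - n)] is [1] if [tri s <= n] and [0] otherwise, so [diag_index n]
   is the largest [s] with [tri s <= n]. *)
Fixpoint count_tri (k n : nat) : nat :=
  match k with 0 => 0 | S m => count_tri m n + (1 - (tri (S m) - n)) end.

Definition diag_index (n : nat) : nat := count_tri n n.
Definition unpair2 (n : nat) : nat := n - tri (diag_index n).
Definition unpair1 (n : nat) : nat := diag_index n - unpair2 n.

Lemma count_tri_spec s b k : b <= s -> count_tri k (tri s + b) = Nat.min k s.
Proof.
  intros Hb. induction k as [|m IH]; cbn [count_tri]; [lia|].
  rewrite IH. destruct (le_lt_dec (S m) s) as [H|H].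
  - pose proof (tri_le_mono _ _ H). lia.
  - assert (tri (S s) <= tri (S m)) by (apply tri_le_mono; lia).
    cbn [tri] in *. lia.
Qed.

Lemma diag_index_cpair a b : diag_index (cpair a b) = a + b.
Proof.
  unfold diag_index. rewrite cpair_tri, count_tri_spec by lia.
  pose proof (le_tri (a + b)). lia.
Qed.

Lemma unpair2_cpair a b : unpair2 (cpair a b) = b.
Proof. unfold unpair2. rewrite diag_index_cpair, cpair_tri. lia. Qed.

Lemma unpair1_cpair a b : unpair1 (cpair a b) = a.
Proof. unfold unpair1. rewrite unpair2_cpair, diag_index_cpair. lia. Qed.

Lemma cpair_inj a b c d : cpair a b = cpair c d -> a = c /\ b = d.
Proof.
  intros H. split.
  - rewrite <- (unpair1_cpair a b), <- (unpair1_cpair c d). congruence.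
  - rewrite <- (unpair2_cpair a b), <- (unpair2_cpair c d). congruence.
Qed.

Lemma pr_eval_rec0 g h ys : pr_eval (PRec g h) (0 :: ys) = pr_eval g ys.
Proof. reflexivity. Qed.
Lemma pr_eval_recS g h m ys :
  pr_eval (PRec g h) (S m :: ys) = pr_eval h (m :: pr_eval (PRec g h) (m :: ys) :: ys).
Proof. reflexivity. Qed.
Lemma pr_eval_comp1 g a xs : pr_eval (PComp g [a]) xs = pr_eval g [pr_eval a xs].
Proof. reflexivity. Qed.
Lemma pr_eval_comp2 g a b xs :
  pr_eval (PComp g [a; b]) xs = pr_eval g [pr_eval a xs; pr_eval b xs].
Proof. reflexivity. Qed.

Lemma pr_eval_proj i xs : pr_eval (PProj i) xs = nth i xs 0.
Proof. reflexivity. Qed.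
Lemma pr_eval_succ xs : pr_eval PSucc xs = S (hd 0 xs).
Proof. reflexivity. Qed.
Lemma pr_eval_zero xs : pr_eval PZero xs = 0.
Proof. reflexivity. Qed.

Ltac pr_simpl :=
  repeat rewrite ?pr_eval_rec0, ?pr_eval_recS, ?pr_eval_comp1, ?pr_eval_comp2,
    ?pr_eval_proj, ?pr_eval_succ, ?pr_eval_zero;
  cbn [nth hd].

Fixpoint pr_const (k : nat) : PR :=
  match k with 0 => PZero | S k => PComp PSucc [pr_const k] end.
Definition pr_add : PR := PRec (PProj 0) (PComp PSucc [PProj 1]).
Definition pr_mul : PR := PRec PZero (PComp pr_add [PProj 1; PProj 2]).
Definition pr_pred : PR := PRec PZero (PProj 0).
Definition pr_rsub : PR := PRec (PProj 0) (PComp pr_pred [PProj 1]).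
Definition pr_sub : PR := PComp pr_rsub [PProj 1; PProj 0].
Definition pr_tri : PR := PRec PZero (PComp pr_add [PProj 1; PComp PSucc [PProj 0]]).
Definition pr_cpair : PR :=
  PComp pr_add [PComp pr_tri [PComp pr_add [PProj 0; PProj 1]]; PProj 1].
Definition pr_count_tri : PR :=
  PRec PZero (PComp pr_add [PProj 1; PComp pr_sub [pr_const 1;
    PComp pr_sub [PComp pr_tri [PComp PSucc [PProj 0]]; PProj 2]]]).
Definition pr_diag_index : PR := PComp pr_count_tri [PProj 0; PProj 0].
Definition pr_unpair2 : PR := PComp pr_sub [PProj 0; PComp pr_tri [pr_diag_index]].
Definition pr_unpair1 : PR := PComp pr_sub [pr_diag_index; pr_unpair2].

Lemma pr_const_spec k xs : pr_eval (pr_const k) xs = k.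
Proof. induction k; simpl; auto. Qed.
Lemma pr_add_spec u v l : pr_eval pr_add (u :: v :: l) = u + v.
Proof. unfold pr_add. induction u; pr_simpl; [|rewrite IHu]; lia. Qed.
Lemma pr_mul_spec u v l : pr_eval pr_mul (u :: v :: l) = u * v.
Proof. unfold pr_mul. induction u; pr_simpl; [|rewrite pr_add_spec, IHu]; lia. Qed.
Lemma pr_pred_spec u l : pr_eval pr_pred (u :: l) = pred u.
Proof. destruct u; reflexivity. Qed.
Lemma pr_rsub_spec v u l : pr_eval pr_rsub (v :: u :: l) = u - v.
Proof. unfold pr_rsub. induction v; pr_simpl; [|rewrite pr_pred_spec, IHv]; lia. Qed.
Lemma pr_sub_spec u v l : pr_eval pr_sub (u :: v :: l) = u - v.
Proof. unfold pr_sub. pr_simpl. apply pr_rsub_spec. Qed.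
Lemma pr_tri_spec s l : pr_eval pr_tri (s :: l) = tri s.
Proof. unfold pr_tri. induction s; pr_simpl; [|rewrite pr_add_spec, IHs]; reflexivity. Qed.
Lemma pr_cpair_spec u v l : pr_eval pr_cpair (u :: v :: l) = cpair u v.
Proof.
  unfold pr_cpair. pr_simpl. rewrite pr_add_spec, pr_tri_spec, pr_add_spec, cpair_tri.
  reflexivity.
Qed.
Lemma pr_count_tri_spec k n l : pr_eval pr_count_tri (k :: n :: l) = count_tri k n.
Proof.
  unfold pr_count_tri. induction k; pr_simpl; [reflexivity|].
  rewrite pr_const_spec, pr_tri_spec, !pr_sub_spec, pr_add_spec, IHk. reflexivity.
Qed.
Lemma pr_diag_index_spec n l : pr_eval pr_diag_index (n :: l) = diag_index n.
Proof. unfold pr_diag_index. pr_simpl. apply pr_count_tri_spec. Qed.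
Lemma pr_unpair2_spec n l : pr_eval pr_unpair2 (n :: l) = unpair2 n.
Proof.
  unfold pr_unpair2. pr_simpl. rewrite pr_diag_index_spec, pr_tri_spec, pr_sub_spec.
  reflexivity.
Qed.
Lemma pr_unpair1_spec n l : pr_eval pr_unpair1 (n :: l) = unpair1 n.
Proof.
  unfold pr_unpair1. pr_simpl. rewrite pr_diag_index_spec, pr_unpair2_spec, pr_sub_spec.
  reflexivity.
Qed.

(** * Enumerating families of axioms *)

(* [EX] is the variable tested for membership in the c.e. set, [EN] the
   existentially quantified witness. *)
Inductive expr : Type :=
| EX | EN | ECst (k : nat) | ESucc (e : expr)
| EAdd (e1 e2 : expr) | EMul (e1 e2 : expr) | ESub (e1 e2 : expr)
| EPair (e1 e2 : expr) | EFst (e : expr) | ESnd (e : expr).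

Fixpoint eval (e : expr) (x n : nat) : nat :=
  match e with
  | EX => x
  | EN => n
  | ECst k => k
  | ESucc e => S (eval e x n)
  | EAdd e1 e2 => eval e1 x n + eval e2 x n
  | EMul e1 e2 => eval e1 x n * eval e2 x n
  | ESub e1 e2 => eval e1 x n - eval e2 x n
  | EPair e1 e2 => cpair (eval e1 x n) (eval e2 x n)
  | EFst e => unpair1 (eval e x n)
  | ESnd e => unpair2 (eval e x n)
  end.

Fixpoint compile (e : expr) : PR :=
  match e with
  | EX => PProj 0
  | EN => PProj 1
  | ECst k => pr_const k
  | ESucc e => PComp PSucc [compile e]
  | EAdd e1 e2 => PComp pr_add [compile e1; compile e2]
  | EMul e1 e2 => PComp pr_mul [compile e1; compile e2]
  | ESub e1 e2 => PComp pr_sub [compile e1; compile e2]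
  | EPair e1 e2 => PComp pr_cpair [compile e1; compile e2]
  | EFst e => PComp pr_unpair1 [compile e]
  | ESnd e => PComp pr_unpair2 [compile e]
  end.

Lemma pr_eval_compile e x n : pr_eval (compile e) [x; n] = eval e x n.
Proof.
  induction e; cbn [compile eval]; pr_simpl;
    rewrite ?IHe, ?IHe1, ?IHe2; auto.
  - apply pr_const_spec.
  - apply pr_add_spec.
  - apply pr_mul_spec.
  - apply pr_sub_spec.
  - apply pr_cpair_spec.
  - apply pr_unpair1_spec.
  - apply pr_unpair2_spec.
Qed.

Lemma ce_set_zeros (e : expr) : ce_set (fun x => exists n, eval e x n = 0).
Proof. exists (compile e). intros x. setoid_rewrite pr_eval_compile. reflexivity. Qed.

Fixpoint close (e : expr) : expr :=
  match e with
  | EX => ECst 0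
  | EN | ECst _ => e
  | ESucc e => ESucc (close e)
  | EAdd e1 e2 => EAdd (close e1) (close e2)
  | EMul e1 e2 => EMul (close e1) (close e2)
  | ESub e1 e2 => ESub (close e1) (close e2)
  | EPair e1 e2 => EPair (close e1) (close e2)
  | EFst e => EFst (close e)
  | ESnd e => ESnd (close e)
  end.

Lemma eval_close e x n : eval (close e) x n = eval e 0 n.
Proof. induction e; cbn [close eval]; congruence. Qed.

Fixpoint eprod (l : list expr) : expr :=
  match l with [] => ECst 1 | e :: t => EMul e (eprod t) end.

Lemma eval_eprod_eq0 l x n :
  eval (eprod l) x n = 0 <-> exists e, In e l /\ eval e x n = 0.
Proof.
  induction l as [|e l IH]; cbn [eprod eval In].
  - split; [discriminate | intros [e [[] _]]].
  - rewrite Nat.mul_eq_0, IH. firstorder congruence.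
Qed.

Definition edist (e1 e2 : expr) : expr := EAdd (ESub e1 e2) (ESub e2 e1).

Lemma eval_edist_eq0 e1 e2 x n : eval (edist e1 e2) x n = 0 <-> eval e1 x n = eval e2 x n.
Proof. cbn [edist eval]. lia. Qed.

Inductive template : Type :=
| TEq (e1 e2 : expr) | TLt (e1 e2 : expr) | TNeq (e1 e2 : expr) | TNlt (e1 e2 : expr).

Definition template_eval (t : template) (n : nat) : basic :=
  match t with
  | TEq e1 e2 => BPos (AEq (eval e1 0 n) (eval e2 0 n))
  | TLt e1 e2 => BPos (ALt (eval e1 0 n) (eval e2 0 n))
  | TNeq e1 e2 => BNeg (AEq (eval e1 0 n) (eval e2 0 n))
  | TNlt e1 e2 => BNeg (ALt (eval e1 0 n) (eval e2 0 n))
  end.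

Definition template_code (t : template) : expr :=
  match t with
  | TEq e1 e2 => EPair (ECst 0) (EPair (ECst 0) (EPair e1 e2))
  | TLt e1 e2 => EPair (ECst 0) (EPair (ECst 1) (EPair e1 e2))
  | TNeq e1 e2 => EPair (ECst 1) (EPair (ECst 0) (EPair e1 e2))
  | TNlt e1 e2 => EPair (ECst 1) (EPair (ECst 1) (EPair e1 e2))
  end.

Lemma eval_template_code t n : eval (template_code t) 0 n = code_basic (template_eval t n).
Proof. destruct t; reflexivity. Qed.

Fixpoint templates_code (l : list template) : expr :=
  match l with
  | [] => ECst 0
  | t :: l => ESucc (EPair (template_code t) (templates_code l))
  end.

Lemma eval_templates_code l n :
  eval (templates_code l) 0 n = code_list (map (fun t => template_eval t n) l).
Proof.
  induction l; cbn [templates_code eval map code_list]; auto.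
  rewrite eval_template_code, IHl. reflexivity.
Qed.

Record family : Type :=
  { fam_hyps : list template; fam_concls : list template; fam_guard : expr }.

Definition family_op (fm : family) : enum_op := fun alpha phi =>
  exists n, eval (fam_guard fm) 0 n = 0 /\
    alpha = map (fun t => template_eval t n) (fam_hyps fm) /\
    In phi (map (fun t => template_eval t n) (fam_concls fm)).

Definition family_test (fm : family) : expr :=
  EAdd (eprod (map (fun t => edist EX (close (EPair (templates_code (fam_hyps fm))
                                                     (template_code t))))
                   (fam_concls fm)))
       (close (fam_guard fm)).

Lemma eval_family_test_eq0 fm x n :
  eval (family_test fm) x n = 0 <->
  exists alpha phi, x = code_pair alpha phi /\
    eval (fam_guard fm) 0 n = 0 /\
    alpha = map (fun t => template_eval t n) (fam_hyps fm) /\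
    In phi (map (fun t => template_eval t n) (fam_concls fm)).
Proof.
  unfold family_test. cbn [eval]. rewrite Nat.eq_add_0, eval_eprod_eq0, eval_close.
  split.
  - intros [[e [He Hx]] Hg]. apply in_map_iff in He as [t [<- Ht]].
    apply eval_edist_eq0 in Hx. rewrite eval_close in Hx. cbn [eval] in Hx.
    rewrite eval_templates_code, eval_template_code in Hx.
    do 2 eexists. split; [exact Hx|]. split; [exact Hg|]. split; [reflexivity|].
    apply (in_map (fun t => template_eval t n)). exact Ht.
  - intros [alpha [phi [-> [Hg [-> Hphi]]]]]. split; [|exact Hg].
    apply in_map_iff in Hphi as [t [<- Ht]].
    eexists. split; [apply in_map_iff; eauto|].
    apply eval_edist_eq0. rewrite eval_close. cbn [eval].
    rewrite eval_templates_code, eval_template_code. reflexivity.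
Qed.

Lemma is_ce_op_ext (G G' : enum_op) :
  (forall alpha phi, G alpha phi <-> G' alpha phi) -> is_ce_op G -> is_ce_op G'.
Proof.
  intros HG [f Hf]. exists f. intros x. rewrite <- Hf.
  setoid_rewrite HG. reflexivity.
Qed.

Lemma is_ce_op_families (fms : list family) :
  is_ce_op (fun alpha phi => exists fm, In fm fms /\ family_op fm alpha phi).
Proof.
  destruct (ce_set_zeros (eprod (map family_test fms))) as [f Hf].
  exists f. intros x. rewrite <- Hf. setoid_rewrite eval_eprod_eq0.
  setoid_rewrite in_map_iff. split.
  - intros [alpha [phi [-> [fm [Hfm [n Hn]]]]]].
    exists n, (family_test fm). split; [eauto|].
    apply eval_family_test_eq0. exists alpha, phi. tauto.
  - intros [n [e [[fm [<- Hfm]] He]]].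
    apply eval_family_test_eq0 in He as [alpha [phi [-> Hn]]].
    exists alpha, phi. split; [reflexivity|]. exists fm. split; [exact Hfm|]. exists n. exact Hn.
Qed.

(** * The enumeration operator *)

Definition member_hyps (a b c c' : nat) : list basic :=
  [BPos (AEq a a); BPos (ALt c b); BPos (ALt b c')].

Definition self_concls (x : nat) : list basic := [BPos (AEq x x); BNeg (ALt x x)].

Definition lt_concls (x y : nat) : list basic :=
  [BPos (ALt x y); BNeg (ALt y x); BNeg (AEq x y); BNeg (AEq y x)].

Inductive gamma : list basic -> basic -> Prop :=
| gamma_self a b c c' phi :
    c < a -> c' < a -> In phi (self_concls (cpair a b)) ->
    gamma (member_hyps a b c c') phi
| gamma_lt_fst a b c c' a' b' d d' phi :
    c < a -> c' < a -> d < a' -> d' < a' ->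
    In phi (lt_concls (cpair a b) (cpair a' b')) ->
    gamma (member_hyps a b c c' ++ member_hyps a' b' d d' ++ [BPos (ALt a a')]) phi
| gamma_lt_snd a b c c' b' d d' phi :
    c < a -> c' < a -> d < a -> d' < a ->
    In phi (lt_concls (cpair a b) (cpair a b')) ->
    gamma (member_hyps a b c c' ++ member_hyps a b' d d' ++ [BPos (ALt b b')]) phi.

Definition proj (k n : nat) : nat := unpair1 (Nat.iter k unpair2 n).

Definition tuple_code (l : list nat) : nat := fold_right cpair 0 l.

Lemma unpair2_tuple_code l : unpair2 (tuple_code l) = tuple_code (tl l).
Proof. destruct l; [reflexivity|apply unpair2_cpair]. Qed.

Lemma proj_tuple_code k l : proj k (tuple_code l) = nth k l 0.
Proof.
  unfold proj. revert l. induction k as [|k IH]; intros l.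
  - destruct l; [reflexivity|apply unpair1_cpair].
  - rewrite Nat.iter_succ_r, unpair2_tuple_code, IH. destruct l; [destruct k|]; reflexivity.
Qed.

Definition EVar (k : nat) : expr := EFst (Nat.iter k ESnd EN).

Lemma eval_EVar k x n : eval (EVar k) x n = proj k n.
Proof.
  unfold EVar, proj. cbn [eval]. f_equal.
  induction k; [reflexivity|]. rewrite !Nat.iter_succ. cbn [eval]. congruence.
Qed.

Definition member_templates (a b c c' : expr) : list template := [TEq a a; TLt c b; TLt b c'].

Definition lt_templates (x y : expr) : list template :=
  [TLt x y; TNlt y x; TNeq x y; TNeq y x].

(* [eval (guard_lt e1 e2) 0 n = 0] iff [eval e1 0 n < eval e2 0 n]. *)
Definition guard_lt (e1 e2 : expr) : expr := ESub (ESucc e1) e2.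

Definition fam_self : family :=
  {| fam_hyps := member_templates (EVar 0) (EVar 1) (EVar 2) (EVar 3);
     fam_concls := [TEq (EPair (EVar 0) (EVar 1)) (EPair (EVar 0) (EVar 1));
                    TNlt (EPair (EVar 0) (EVar 1)) (EPair (EVar 0) (EVar 1))];
     fam_guard := EAdd (guard_lt (EVar 2) (EVar 0)) (guard_lt (EVar 3) (EVar 0)) |}.

Definition fam_lt_fst : family :=
  {| fam_hyps := member_templates (EVar 0) (EVar 1) (EVar 2) (EVar 3) ++
                 member_templates (EVar 4) (EVar 5) (EVar 6) (EVar 7) ++
                 [TLt (EVar 0) (EVar 4)];
     fam_concls := lt_templates (EPair (EVar 0) (EVar 1)) (EPair (EVar 4) (EVar 5));
     fam_guard := EAdd (EAdd (guard_lt (EVar 2) (EVar 0)) (guard_lt (EVar 3) (EVar 0)))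
                       (EAdd (guard_lt (EVar 6) (EVar 4)) (guard_lt (EVar 7) (EVar 4))) |}.

Definition fam_lt_snd : family :=
  {| fam_hyps := member_templates (EVar 0) (EVar 1) (EVar 2) (EVar 3) ++
                 member_templates (EVar 0) (EVar 4) (EVar 5) (EVar 6) ++
                 [TLt (EVar 1) (EVar 4)];
     fam_concls := lt_templates (EPair (EVar 0) (EVar 1)) (EPair (EVar 0) (EVar 4));
     fam_guard := EAdd (EAdd (guard_lt (EVar 2) (EVar 0)) (guard_lt (EVar 3) (EVar 0)))
                       (EAdd (guard_lt (EVar 5) (EVar 0)) (guard_lt (EVar 6) (EVar 0))) |}.

Ltac family_simpl :=
  cbn [fam_guard fam_hyps fam_concls member_templates lt_templates
    guard_lt app map template_eval eval fam_self fam_lt_fst fam_lt_snd]; rewrite ?eval_EVar.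

Lemma gamma_iff_families alpha phi :
  gamma alpha phi <->
  exists fm, In fm [fam_self; fam_lt_fst; fam_lt_snd] /\ family_op fm alpha phi.
Proof.
  split.
  - intros [a b c c' ? ? ? ?|a b c c' a' b' d d' ? ? ? ? ? ?|a b c c' b' d d' ? ? ? ? ? ?].
    + exists fam_self. split; [cbn; tauto|]. exists (tuple_code [a; b; c; c']).
      family_simpl. rewrite !proj_tuple_code. cbn [nth].
      split; [lia|split; [reflexivity|assumption]].
    + exists fam_lt_fst. split; [cbn; tauto|]. exists (tuple_code [a; b; c; c'; a'; b'; d; d']).
      family_simpl. rewrite !proj_tuple_code. cbn [nth].
      split; [lia|split; [reflexivity|assumption]].
    + exists fam_lt_snd. split; [cbn; tauto|]. exists (tuple_code [a; b; c; c'; b'; d; d']).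
      family_simpl. rewrite !proj_tuple_code. cbn [nth].
      split; [lia|split; [reflexivity|assumption]].
  - intros [fm [Hfm [n Hn]]]. revert Hn.
    destruct Hfm as [<-|[<-|[<-|[]]]]; family_simpl; intros (Hg & -> & Hphi).
    + apply gamma_self; auto; lia.
    + apply gamma_lt_fst; auto; lia.
    + apply gamma_lt_snd; auto; lia.
Qed.

Lemma is_ce_op_gamma : is_ce_op gamma.
Proof.
  eapply is_ce_op_ext; [|apply is_ce_op_families].
  intros alpha phi. symmetry. apply gamma_iff_families.
Qed.

Definition linear_on {T} (D : T -> Prop) (R : T -> T -> Prop) : Prop :=
  (forall x, D x -> ~ R x x) /\
  (forall x y z, D x -> D y -> D z -> R x y -> R y z -> R x z) /\
  (forall x y, D x -> D y -> x = y \/ R x y \/ R y x).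

Definition gamma_dom (A : Str) (x : nat) : Prop :=
  exists a b c c', x = cpair a b /\ c < a /\ c' < a /\
    sdom A a /\ sdom A b /\ sdom A c /\ sdom A c' /\ slt A c b /\ slt A b c'.

Definition gamma_lt (A : Str) (x y : nat) : Prop :=
  slt A (unpair1 x) (unpair1 y) \/
  (unpair1 x = unpair1 y /\ slt A (unpair2 x) (unpair2 y)).

Definition gamma_str (A : Str) : Str := {| sdom := gamma_dom A; slt := gamma_lt A |}.

Lemma forall_in_app {T} (P : T -> Prop) l1 l2 :
  (forall s, In s (l1 ++ l2) -> P s) <-> (forall s, In s l1 -> P s) /\ (forall s, In s l2 -> P s).
Proof. setoid_rewrite in_app_iff. firstorder. Qed.

Lemma diag_member_hyps A a b c c' :
  (forall s, In s (member_hyps a b c c') -> diag A s) <->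
  sdom A a /\ sdom A b /\ sdom A c /\ sdom A c' /\ slt A c b /\ slt A b c'.
Proof.
  cbn. split.
  - intros H. pose proof (H _ (or_introl eq_refl)).
    pose proof (H _ (or_intror (or_introl eq_refl))).
    pose proof (H _ (or_intror (or_intror (or_introl eq_refl)))). cbn in *. tauto.
  - intros H s [<-|[<-|[<-|[]]]]; cbn; tauto.
Qed.

Lemma gamma_dom_cpair A a b c c' :
  c < a -> c' < a -> (forall s, In s (member_hyps a b c c') -> diag A s) ->
  gamma_dom A (cpair a b).
Proof. intros Hc Hc' H%diag_member_hyps. exists a, b, c, c'. tauto. Qed.

Lemma gamma_dom_inv A x :
  gamma_dom A x -> x = cpair (unpair1 x) (unpair2 x) /\ sdom A (unpair1 x) /\ sdom A (unpair2 x).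
Proof. intros (a & b & c & c' & -> & H). rewrite unpair1_cpair, unpair2_cpair. tauto. Qed.

Lemma linear_gamma A : linear_on (sdom A) (slt A) -> linear_on (gamma_dom A) (gamma_lt A).
Proof.
  intros (Hirr & Htr & Htot). split; [|split]; unfold gamma_lt.
  - intros x (_ & H1 & H2)%gamma_dom_inv [K|[_ K]]; [exact (Hirr _ H1 K)|exact (Hirr _ H2 K)].
  - intros x y z (_ & X1 & X2)%gamma_dom_inv (_ & Y1 & Y2)%gamma_dom_inv
      (_ & Z1 & Z2)%gamma_dom_inv [K|[E K]] [K'|[E' K']].
    + left. eauto.
    + left. congruence.
    + left. congruence.
    + right. split; [congruence|eauto].
  - intros x y (Ex & X1 & X2)%gamma_dom_inv (Ey & Y1 & Y2)%gamma_dom_inv.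
    destruct (Htot _ _ X1 Y1) as [E|[K|K]];
      [|right; left; left; exact K|right; right; left; exact K].
    destruct (Htot _ _ X2 Y2) as [E'|[K'|K']];
      [|right; left; right; auto|right; right; right; auto].
    left. rewrite Ex, Ey. congruence.
Qed.

Lemma diag_self_concls S x phi :
  linear_on (sdom S) (slt S) -> sdom S x -> In phi (self_concls x) -> diag S phi.
Proof. intros (Hirr & _) Hx [<-|[<-|[]]]; cbn; auto. Qed.

Lemma diag_lt_concls S x y phi :
  linear_on (sdom S) (slt S) -> sdom S x -> sdom S y -> slt S x y ->
  In phi (lt_concls x y) -> diag S phi.
Proof.
  intros (Hirr & Htr & _) Hx Hy Hxy [<-|[<-|[<-|[<-|[]]]]]; cbn; repeat split; auto.
  - intros Hyx. apply (Hirr x Hx). eauto.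
  - intros ->. exact (Hirr y Hy Hxy).
  - intros <-. exact (Hirr y Hy Hxy).
Qed.

Lemma gamma_sound A alpha phi :
  linear_on (sdom A) (slt A) -> gamma alpha phi -> (forall s, In s alpha -> diag A s) ->
  diag (gamma_str A) phi.
Proof.
  intros HA HG Halpha. pose proof (linear_gamma A HA) as HC.
  destruct HG as [a b c c' phi Hc Hc' Hphi|a b c c' a' b' d d' phi Hc Hc' Hd Hd' Hphi
                 |a b c c' b' d d' phi Hc Hc' Hd Hd' Hphi].
  - exact (diag_self_concls (gamma_str A) _ _ HC (gamma_dom_cpair A _ _ _ _ Hc Hc' Halpha) Hphi).
  - apply forall_in_app in Halpha as [H1 H2]. apply forall_in_app in H2 as [H2 H3].
    destruct (H3 _ (or_introl eq_refl)) as (_ & _ & Haa').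
    assert (Hlt : gamma_lt A (cpair a b) (cpair a' b')).
    { unfold gamma_lt. rewrite !unpair1_cpair. auto. }
    exact (diag_lt_concls (gamma_str A) _ _ _ HC (gamma_dom_cpair A _ _ _ _ Hc Hc' H1)
             (gamma_dom_cpair A _ _ _ _ Hd Hd' H2) Hlt Hphi).
  - apply forall_in_app in Halpha as [H1 H2]. apply forall_in_app in H2 as [H2 H3].
    destruct (H3 _ (or_introl eq_refl)) as (_ & _ & Hbb').
    assert (Hlt : gamma_lt A (cpair a b) (cpair a b')).
    { unfold gamma_lt. rewrite !unpair1_cpair, !unpair2_cpair. auto. }
    exact (diag_lt_concls (gamma_str A) _ _ _ HC (gamma_dom_cpair A _ _ _ _ Hc Hc' H1)
             (gamma_dom_cpair A _ _ _ _ Hd Hd' H2) Hlt Hphi).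
Qed.

Lemma gamma_derives_self A x phi :
  gamma_dom A x -> In phi (self_concls x) -> apply_op gamma (diag A) phi.
Proof.
  intros (a & b & c & c' & -> & Hc & Hc' & H) Hphi.
  exists (member_hyps a b c c'). split.
  - apply gamma_self; assumption.
  - apply diag_member_hyps. tauto.
Qed.

Lemma gamma_derives_lt A x y phi :
  gamma_dom A x -> gamma_dom A y -> gamma_lt A x y ->
  In phi (lt_concls x y) -> apply_op gamma (diag A) phi.
Proof.
  intros (a & b & c & c' & -> & Hc & Hc' & Hx) (a' & b' & d & d' & -> & Hd & Hd' & Hy) Hxy Hphi.
  unfold gamma_lt in Hxy. rewrite !unpair1_cpair, !unpair2_cpair in Hxy.
  destruct Hxy as [Ha|[<- Hb]].
  - exists (member_hyps a b c c' ++ member_hyps a' b' d d' ++ [BPos (ALt a a')]). split.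
    + apply gamma_lt_fst; assumption.
    + rewrite !forall_in_app, !diag_member_hyps.
      split; [tauto|split; [tauto|]]. intros s [<-|[]]. cbn. tauto.
  - exists (member_hyps a b c c' ++ member_hyps a b' d d' ++ [BPos (ALt b b')]). split.
    + apply gamma_lt_snd; assumption.
    + rewrite !forall_in_app, !diag_member_hyps.
      split; [tauto|split; [tauto|]]. intros s [<-|[]]. cbn. tauto.
Qed.

Lemma gamma_complete A phi :
  linear_on (sdom A) (slt A) -> diag (gamma_str A) phi -> apply_op gamma (diag A) phi.
Proof.
  intros HA. destruct (linear_gamma A HA) as (_ & _ & Htot).
  destruct phi as [[x y|x y]|[x y|x y]]; cbn.
  - intros (Hx & _ & <-). apply (gamma_derives_self A x); cbn; tauto.
  - intros (Hx & Hy & Hxy). apply (gamma_derives_lt A x y); cbn; tauto.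
  - intros (Hx & Hy & Hne). destruct (Htot x y Hx Hy) as [E|[H|H]]; [contradiction| |].
    + apply (gamma_derives_lt A x y); cbn; tauto.
    + apply (gamma_derives_lt A y x); cbn; tauto.
  - intros (Hx & Hy & Hn). destruct (Htot x y Hx Hy) as [<-|[H|H]]; [|contradiction|].
    + apply (gamma_derives_self A x); cbn; tauto.
    + apply (gamma_derives_lt A y x); cbn; tauto.
Qed.

Lemma apply_gamma_diag A :
  linear_on (sdom A) (slt A) ->
  forall s, apply_op gamma (diag A) s <-> diag (gamma_str A) s.
Proof.
  intros HA s. split.
  - intros (alpha & HG & Halpha). exact (gamma_sound A alpha s HA HG Halpha).
  - apply gamma_complete. exact HA.
Qed.

(** * Recognising omega and omega^2 *)

Definition iso_on {T} (D : T -> Prop) (R : T -> T -> Prop) (L : OrdT) : Prop :=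
  exists h : T -> car L,
    (forall p, exists x, D x /\ h x = p) /\
    (forall x y, D x -> D y -> h x = h y -> x = y) /\
    (forall x y, D x -> D y -> (R x y <-> olt L (h x) (h y))).

Definition omega : OrdT := {| car := nat; olt := lt |}.

Definition omega_copies (Y : OrdT) : OrdT :=
  {| car := nat * car Y;
     olt := fun p q => fst p < fst q \/ (fst p = fst q /\ olt Y (snd p) (snd q)) |}.

Definition finite_preds {T} (D : T -> Prop) (R : T -> T -> Prop) : Prop :=
  forall x, D x -> exists l, forall y, D y -> R y x -> In y l.

Definition no_max {T} (D : T -> Prop) (R : T -> T -> Prop) : Prop :=
  forall x, D x -> exists y, D y /\ R x y.

Lemma linear_on_sub {T} (D S : T -> Prop) R :
  (forall x, S x -> D x) -> linear_on D R -> linear_on S R.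
Proof. intros HS (Hirr & Htr & Htot). split; [|split]; eauto. Qed.

Lemma linear_on_iso {T} (D : T -> Prop) R L :
  iso_on D R L -> linear_on (fun _ => True) (olt L) -> linear_on D R.
Proof.
  intros (h & _ & Hinj & Hlt) (Lirr & Ltr & Ltot). split; [|split].
  - intros x Hx H%Hlt; auto. exact (Lirr _ I H).
  - intros x y z Hx Hy Hz Hxy%Hlt Hyz%Hlt; auto. apply Hlt; eauto.
  - intros x y Hx Hy. destruct (Ltot (h x) (h y) I I) as [E|[K|K]].
    + left. auto.
    + right; left. apply Hlt; auto.
    + right; right. apply Hlt; auto.
Qed.

Lemma not_inj_into_list {T} (g : nat -> T) :
  (forall a b, g a = g b -> a = b) -> forall l, exists t, ~ In (g t) l.
Proof.
  intros Hg l. apply NNPP. intros Hn.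
  assert (Hincl : incl (map g (seq 0 (S (length l)))) l).
  { intros z (k & <- & _)%in_map_iff. apply NNPP. intros Hk. eauto. }
  apply NoDup_incl_length in Hincl.
  - rewrite length_map, length_seq in Hincl. lia.
  - apply Injective_map_NoDup; [intros a b; apply Hg|apply seq_NoDup].
Qed.

Lemma inj_unbounded (g : nat -> nat) :
  (forall a b, g a = g b -> a = b) -> forall N, exists t, N < g t.
Proof.
  intros Hg N. destruct (not_inj_into_list g Hg (seq 0 (S N))) as [t Ht].
  exists t. destruct (le_lt_dec (g t) N); auto.
  exfalso. apply Ht, in_seq. lia.
Qed.

Lemma list_least {T} (D S : T -> Prop) R x :
  linear_on D R -> (forall y, S y -> D y) -> S x ->
  forall l, exists m, S m /\ In m (x :: l) /\ forall w, S w -> In w (x :: l) -> ~ R w m.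
Proof.
  intros (Hirr & Htr & _) HSD Hx. induction l as [|z l IH].
  - exists x. split; [exact Hx|split; [left; reflexivity|]].
    intros w Hw [<-|[]]. apply Hirr. auto.
  - destruct IH as (m & Hm & Hin & Hmin).
    destruct (classic (S z /\ R z m)) as [[Hz Hzm]|Hzm].
    + exists z. split; [exact Hz|split; [right; left; reflexivity|]].
      intros w Hw [<-|[<-|Hwl]] Hwz.
      * apply (Hmin x Hw (or_introl eq_refl)). eauto.
      * exact (Hirr z (HSD z Hw) Hwz).
      * apply (Hmin w Hw (or_intror Hwl)). eauto.
    + exists m. split; [exact Hm|split; [destruct Hin; cbn; tauto|]].
      intros w Hw [<-|[<-|Hwl]] Hwm.
      * exact (Hmin x Hw (or_introl eq_refl) Hwm).
      * tauto.
      * exact (Hmin w Hw (or_intror Hwl) Hwm).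
Qed.

Lemma exists_least {T} (D S : T -> Prop) R :
  linear_on D R -> finite_preds D R -> (forall y, S y -> D y) -> (exists x, S x) ->
  exists m, S m /\ forall y, S y -> ~ R y m.
Proof.
  intros HL Hf HSD [x Hx]. destruct (Hf x (HSD x Hx)) as [l Hl].
  destruct (list_least D S R x HL HSD Hx l) as (m & Hm & Hin & Hmin).
  exists m. split; [exact Hm|]. intros y Hy Hym.
  destruct HL as (_ & Htr & Htot).
  assert (Hyx : R y x -> False).
  { intros Hyx. exact (Hmin y Hy (or_intror (Hl y (HSD y Hy) Hyx)) Hym). }
  destruct (Htot m x (HSD m Hm) (HSD x Hx)) as [->|[Hmx|Hxm]].
  - exact (Hyx Hym).
  - apply Hyx. eauto.
  - exact (Hmin x Hx (or_introl eq_refl) Hxm).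
Qed.

Lemma iso_omega_of_enum {T} (D : T -> Prop) R (e : nat -> T) :
  linear_on D R -> (forall n, D (e n)) -> (forall n m, n < m -> R (e n) (e m)) ->
  (forall y, D y -> exists n, e n = y) -> iso_on D R omega.
Proof.
  intros (Hirr & Htr & _) He Hmono Honto.
  assert (Hlt_iff : forall n m, R (e n) (e m) <-> n < m).
  { intros n m. split; [|apply Hmono]. intros H.
    destruct (lt_eq_lt_dec n m) as [[Hnm|<-]|Hmn]; [exact Hnm| |];
      exfalso; [exact (Hirr _ (He n) H)|].
    exact (Hirr _ (He n) (Htr _ _ _ (He _) (He _) (He _) H (Hmono _ _ Hmn))). }
  set (h := fun x => epsilon (inhabits 0) (fun n => e n = x)).
  assert (Hh : forall x, D x -> e (h x) = x) by (intros x Hx; apply epsilon_spec, Honto, Hx).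
  exists h. split; [|split].
  - intros n. exists (e n). split; [apply He|].
    destruct (lt_eq_lt_dec (h (e n)) n) as [[K|K]|K]; [|exact K|];
      apply Hlt_iff in K; rewrite Hh in K by apply He; exfalso; exact (Hirr _ (He n) K).
  - intros x y Hx Hy E. rewrite <- (Hh x Hx), <- (Hh y Hy), E. reflexivity.
  - intros x y Hx Hy. cbn. rewrite <- Hlt_iff, !Hh by assumption. reflexivity.
Qed.

Section IsoOmega.

Variables (T : Type) (D : T -> Prop) (R : T -> T -> Prop).
Hypotheses (HL : linear_on D R) (Hfin : finite_preds D R) (Hne : exists x, D x)
  (Hnomax : no_max D R).

Definition inhabited_of_ne : inhabited T := let (x, _) := Hne in inhabits x.

Definition least (S : T -> Prop) : T :=
  epsilon inhabited_of_ne (fun m => S m /\ forall y, S y -> ~ R y m).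

Lemma least_spec (S : T -> Prop) :
  (forall y, S y -> D y) -> (exists x, S x) ->
  S (least S) /\ forall y, S y -> ~ R y (least S).
Proof.
  intros HSD HS. unfold least. apply epsilon_spec. exact (exists_least D S R HL Hfin HSD HS).
Qed.

Fixpoint enum (n : nat) : T :=
  match n with
  | 0 => least D
  | S n => least (fun y => D y /\ R (enum n) y)
  end.

Lemma enum_zero : D (enum 0) /\ forall y, D y -> ~ R y (enum 0).
Proof. apply least_spec; auto. Qed.

Lemma enum_succ n :
  D (enum n) ->
  D (enum (S n)) /\ R (enum n) (enum (S n)) /\
  forall y, D y -> R (enum n) y -> ~ R y (enum (S n)).
Proof.
  intros Hn. destruct (least_spec (fun y => D y /\ R (enum n) y)) as [[H1 H2] H3].
  - tauto.
  - apply Hnomax, Hn.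
  - cbn [enum]. split; [exact H1|split; [exact H2|]]. intros y Hy Hny. apply H3. tauto.
Qed.

Lemma enum_dom n : D (enum n).
Proof. induction n; [apply enum_zero|apply enum_succ, IHn]. Qed.

Lemma enum_mono n m : n < m -> R (enum n) (enum m).
Proof.
  destruct HL as (_ & Htr & _).
  induction 1; [apply enum_succ, enum_dom|].
  eapply Htr; [apply enum_dom..|exact IHle|apply enum_succ, enum_dom].
Qed.

Lemma enum_onto y : D y -> exists n, enum n = y.
Proof.
  intros Hy. apply NNPP. intros Hn. destruct HL as (Hirr & _ & Htot).
  assert (Hbelow : forall n, R (enum n) y).
  { induction n as [|n IH].
    - destruct (Htot _ _ (enum_dom 0) Hy) as [E|[K|K]]; [exfalso; eauto|exact K|].
      exfalso. exact (proj2 enum_zero y Hy K).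
    - destruct (Htot _ _ (enum_dom (S n)) Hy) as [E|[K|K]]; [exfalso; eauto|exact K|].
      exfalso. exact (proj2 (proj2 (enum_succ n (enum_dom n))) y Hy IH K). }
  destruct (Hfin y Hy) as [l Hl].
  assert (Hinj : forall a b, enum a = enum b -> a = b).
  { intros a b E. destruct (lt_eq_lt_dec a b) as [[K|K]|K]; [|exact K|];
      apply enum_mono in K; rewrite E in K; exfalso; exact (Hirr _ (enum_dom _) K). }
  destruct (not_inj_into_list enum Hinj l) as [t Ht].
  exact (Ht (Hl _ (enum_dom t) (Hbelow t))).
Qed.

Theorem iso_omega : iso_on D R omega.
Proof. exact (iso_omega_of_enum D R enum HL enum_dom enum_mono enum_onto). Qed.

End IsoOmega.

Lemma iso_omega_copies {T} (D : T -> Prop) R (Y : OrdT) (pi : T -> nat) :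
  linear_on D R ->
  (forall x y, D x -> D y -> R x y -> pi x <= pi y) ->
  (forall n, iso_on (fun x => D x /\ pi x = n) R Y) ->
  iso_on D R (omega_copies Y).
Proof.
  intros (Hirr & Htr & Htot) Hmono Hfib.
  destruct (choice _ Hfib) as [h Hh].
  exists (fun x => (pi x, h (pi x) x)). split; [|split].
  - intros [n p]. destruct (Hh n) as (Honto & _). destruct (Honto p) as (x & [Hx <-] & <-).
    exists x. auto.
  - intros x y Hx Hy E. injection E as E1 E2. rewrite <- E1 in E2.
    destruct (Hh (pi x)) as (_ & Hinj & _). apply Hinj; auto.
  - intros x y Hx Hy. cbn. destruct (Hh (pi x)) as (_ & _ & Hlt). split.
    + intros Hxy. destruct (Nat.eq_dec (pi x) (pi y)) as [E|E].
      * right. split; [exact E|]. rewrite <- E. apply Hlt; auto.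
      * left. pose proof (Hmono x y Hx Hy Hxy). lia.
    + intros [K|[E K]].
      * destruct (Htot x y Hx Hy) as [<-|[H|H]]; [lia|exact H|].
        pose proof (Hmono y x Hy Hx H). lia.
      * rewrite <- E in K. apply Hlt; auto.
Qed.

Lemma nat_least (P : nat -> Prop) :
  (exists m, P m) -> exists m, P m /\ forall k, k < m -> ~ P k.
Proof.
  intros [m Hm]. induction m as [m IH] using lt_wf_ind.
  destruct (classic (exists k, k < m /\ P k)) as [(k & Hk & HPk)|Hno].
  - exact (IH k Hk HPk).
  - exists m. split; [exact Hm|]. intros k Hk HPk. eauto.
Qed.

Section Omega2.

Variables (T : Type) (D : T -> Prop) (R : T -> T -> Prop) (rho : T -> nat).

Definition infinite_fibre (m : nat) : Prop :=
  forall l, exists y, D y /\ rho y = m /\ ~ In y l.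

Hypotheses (HL : linear_on D R)
  (rho_mono : forall x y, D x -> D y -> R x y -> rho x <= rho y)
  (fibre_finite_preds :
     forall x, D x -> exists l, forall y, D y -> rho y = rho x -> R y x -> In y l)
  (infinite_fibres_cofinal : forall n, exists m, n <= m /\ infinite_fibre m).

(* The blocks of the condensation: [rho]-fibres up to and including the next
   infinite one are merged, so [x] lies in block [infinite_below (rho x)]. *)
Fixpoint infinite_below (k : nat) : nat :=
  match k with
  | 0 => 0
  | S k => infinite_below k + if excluded_middle_informative (infinite_fibre k) then 1 else 0
  end.

Lemma infinite_below_mono k k' : k <= k' -> infinite_below k <= infinite_below k'.
Proof. induction 1; cbn [infinite_below]; lia. Qed.

Lemma infinite_below_lt k k' :
  k < k' -> infinite_fibre k -> infinite_below k < infinite_below k'.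
Proof.
  intros Hk Hinf. apply (Nat.lt_le_trans _ (infinite_below (S k))).
  - cbn [infinite_below]. destruct excluded_middle_informative; [lia|contradiction].
  - apply infinite_below_mono. exact Hk.
Qed.

Lemma next_infinite k :
  exists m, k <= m /\ infinite_fibre m /\ infinite_below m = infinite_below k.
Proof.
  destruct (nat_least (fun m => k <= m /\ infinite_fibre m)) as (m & [Hkm Hm] & Hmin).
  { exact (infinite_fibres_cofinal k). }
  exists m. split; [exact Hkm|split; [exact Hm|]].
  assert (Hconst : forall d, k + d <= m -> infinite_below (k + d) = infinite_below k).
  { induction d as [|d IH]; intros Hd; [f_equal; lia|].
    rewrite Nat.add_succ_r. cbn [infinite_below].
    destruct excluded_middle_informative as [Hinf|_].
    - exfalso. apply (Hmin (k + d)); [lia|split; [lia|exact Hinf]].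
    - rewrite IH by lia. lia. }
  replace m with (k + (m - k)) by lia. apply Hconst. lia.
Qed.

Lemma infinite_with_count n : exists m, infinite_fibre m /\ infinite_below m = n.
Proof.
  induction n as [|n (m & Hm & Hcnt)].
  - destruct (next_infinite 0) as (m & _ & Hm & Hcnt). eauto.
  - destruct (next_infinite (S m)) as (m' & _ & Hm' & Hcnt'). exists m'. split; [exact Hm'|].
    rewrite Hcnt'. cbn [infinite_below]. destruct excluded_middle_informative; [lia|contradiction].
Qed.

Definition block (n : nat) (x : T) : Prop := D x /\ infinite_below (rho x) = n.

Lemma block_nonempty n : exists x, block n x.
Proof.
  destruct (infinite_with_count n) as (m & Hm & Hcnt). destruct (Hm []) as (y & Hy & Ey & _).
  exists y. split; [exact Hy|]. rewrite Ey. exact Hcnt.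
Qed.

Lemma block_no_max n : no_max (block n) R.
Proof.
  intros x [Hx Hbx]. destruct HL as (_ & _ & Htot).
  destruct (next_infinite (rho x)) as (m & Hxm & Hm & Hcnt).
  destruct (fibre_finite_preds x Hx) as [l Hl].
  destruct (Hm (x :: l)) as (y & Hy & Ey & Hnotin).
  exists y. split; [split; [exact Hy|congruence]|].
  destruct (Htot x y Hx Hy) as [<-|[K|K]]; [exfalso; apply Hnotin; left; reflexivity|exact K|].
  exfalso. apply Hnotin. right. apply Hl; [exact Hy| |exact K].
  pose proof (rho_mono y x Hy Hx K). lia.
Qed.

Lemma not_infinite_fibre_finite m :
  ~ infinite_fibre m -> exists l, forall y, D y -> rho y = m -> In y l.
Proof.
  intros Hfin. apply NNPP. intros Hno. apply Hfin. intros l. apply NNPP. intros Hl.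
  apply Hno. exists l. intros y Hy Ey. apply NNPP. intros Hy'. eauto.
Qed.

Lemma block_finite_preds n : finite_preds (block n) R.
Proof.
  intros x [Hx Hbx].
  set (fibre_list m := epsilon (inhabits []) (fun l => forall y, D y -> rho y = m -> In y l)).
  destruct (fibre_finite_preds x Hx) as [l Hl].
  exists (l ++ flat_map fibre_list (seq 0 (rho x))).
  intros y [Hy Hby] Hyx. apply in_or_app.
  pose proof (rho_mono y x Hy Hx Hyx) as Hle.
  destruct (Nat.eq_dec (rho y) (rho x)) as [E|Hne]; [left; exact (Hl y Hy E Hyx)|right].
  apply in_flat_map. exists (rho y). split; [apply in_seq; lia|].
  assert (Hfin : ~ infinite_fibre (rho y)).
  { intros Hinf. pose proof (infinite_below_lt (rho y) (rho x) ltac:(lia) Hinf). lia. }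
  apply (epsilon_spec (inhabits []) (fun l => forall z, D z -> rho z = rho y -> In z l));
    [exact (not_infinite_fibre_finite _ Hfin)|exact Hy|reflexivity].
Qed.

Theorem iso_omega2_of_fibres : iso_on D R omega2.
Proof.
  change (iso_on D R (omega_copies omega)).
  apply (iso_omega_copies D R omega (fun x => infinite_below (rho x)) HL).
  - intros x y Hx Hy Hxy. apply infinite_below_mono, rho_mono; assumption.
  - intros n. apply (iso_omega _ (block n) R).
    + apply (linear_on_sub D); [intros x []; assumption|exact HL].
    + apply block_finite_preds.
    + apply block_nonempty.
    + apply block_no_max.
Qed.

End Omega2.

(** * The image of omega^2 is omega^3 *)

Definition lex (p q : nat * nat) : Prop := olt omega2 p q.

Lemma linear_lex : linear_on (fun _ => True) lex.
Proof.
  unfold lex. split; [|split]; cbn.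
  - intros [a b] _. cbn. lia.
  - intros [a b] [c d] [e g] _ _ _. cbn. lia.
  - intros [a b] [c d] _ _. cbn.
    destruct (lt_eq_lt_dec a c) as [[H|<-]|H]; [tauto| |tauto].
    destruct (lt_eq_lt_dec b d) as [[H|<-]|H]; tauto.
Qed.

Section GammaOmega2.

Variables (A : Str) (f : nat -> nat * nat).
Hypotheses (f_onto : forall p, exists a, sdom A a /\ f a = p)
  (f_inj : forall a b, sdom A a -> sdom A b -> f a = f b -> a = b)
  (f_lt : forall a b, sdom A a -> sdom A b -> (slt A a b <-> lex (f a) (f b))).

Definition point (p : nat * nat) : nat :=
  epsilon (inhabits 0) (fun a => sdom A a /\ f a = p).

Lemma point_spec p : sdom A (point p) /\ f (point p) = p.
Proof. unfold point. apply epsilon_spec, f_onto. Qed.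

Lemma point_f a : sdom A a -> point (f a) = a.
Proof. intros Ha. apply f_inj; [apply point_spec|exact Ha|apply point_spec]. Qed.

Lemma point_inj p q : point p = point q -> p = q.
Proof. intros E. rewrite <- (proj2 (point_spec p)), <- (proj2 (point_spec q)), E. reflexivity. Qed.

Lemma point_lt p q : lex p q -> slt A (point p) (point q).
Proof.
  intros H. apply f_lt; [apply point_spec..|]. rewrite !(proj2 (point_spec _)). exact H.
Qed.

Lemma linear_A : linear_on (sdom A) (slt A).
Proof. apply (linear_on_iso _ _ omega2); [exists f; auto|exact linear_lex]. Qed.

Fixpoint row_bound (a : nat) : nat :=
  match a with 0 => 0 | S a => Nat.max (row_bound a) (fst (f a)) end.

Lemma row_bound_ge c a : c < a -> fst (f c) <= row_bound a.
Proof.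
  induction a as [|a IH]; cbn [row_bound]; intros H; [lia|].
  destruct (Nat.eq_dec c a) as [->|Hne]; [lia|]. specialize (IH ltac:(lia)). lia.
Qed.

Lemma gamma_dom_row_bound x : gamma_dom A x -> fst (f (unpair2 x)) <= row_bound (unpair1 x).
Proof.
  intros (a & b & c & c' & -> & _ & Hc' & _ & Hb & _ & Hc'd & _ & Hbc').
  rewrite unpair1_cpair, unpair2_cpair.
  apply f_lt in Hbc'; [|assumption..]. unfold lex in Hbc'. cbn in Hbc'.
  pose proof (row_bound_ge c' a Hc'). lia.
Qed.

Section Row.

Variable i : nat.

Definition row (x : nat) : Prop := gamma_dom A x /\ fst (f (unpair1 x)) = i.

(* Positions [offset j .. offset j + row_bound (point (i, j))] are reserved for the
   pairs with first component [point (i, j)]. *)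
Fixpoint offset (j : nat) : nat :=
  match j with 0 => 0 | S j => offset j + S (row_bound (point (i, j))) end.

Definition row_pos (x : nat) : nat := offset (snd (f (unpair1 x))) + fst (f (unpair2 x)).

Lemma offset_ge j : j <= offset j.
Proof. induction j; cbn [offset]; lia. Qed.

Lemma offset_lt j j' k : k <= row_bound (point (i, j)) -> j < j' -> offset j + k < offset j'.
Proof.
  intros Hk. induction 1; cbn [offset]; lia.
Qed.

Lemma row_inv x :
  row x -> f (unpair1 x) = (i, snd (f (unpair1 x))) /\
           fst (f (unpair2 x)) <= row_bound (point (i, snd (f (unpair1 x)))).
Proof.
  intros [Hx Hi]. assert (Ef : f (unpair1 x) = (i, snd (f (unpair1 x)))).
  { rewrite <- Hi. apply surjective_pairing. }
  split; [exact Ef|]. rewrite <- Ef, point_f by apply (gamma_dom_inv A x Hx).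
  exact (gamma_dom_row_bound x Hx).
Qed.

Lemma row_pos_lt_of_fst x y :
  row x -> row y -> snd (f (unpair1 x)) < snd (f (unpair1 y)) -> row_pos x < row_pos y.
Proof.
  intros Hx Hy H. unfold row_pos. pose proof (offset_lt _ _ _ (proj2 (row_inv x Hx)) H). lia.
Qed.

Lemma row_pos_mono x y : row x -> row y -> gamma_lt A x y -> row_pos x <= row_pos y.
Proof.
  intros Hx Hy Hxy. pose proof (gamma_dom_inv A x (proj1 Hx)) as (_ & Xa & Xb).
  pose proof (gamma_dom_inv A y (proj1 Hy)) as (_ & Ya & Yb).
  destruct Hxy as [K|[E K]].
  - apply f_lt in K; [|assumption..].
    rewrite (proj1 (row_inv x Hx)), (proj1 (row_inv y Hy)) in K. cbn in K.
    apply Nat.lt_le_incl, row_pos_lt_of_fst; [assumption..|lia].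
  - apply f_lt in K; [|assumption..]. unfold lex in K. cbn in K.
    unfold row_pos. rewrite E. lia.
Qed.

Lemma row_pos_eq x y : row x -> row y -> row_pos x = row_pos y ->
  unpair1 x = unpair1 y /\ fst (f (unpair2 x)) = fst (f (unpair2 y)).
Proof.
  intros Hx Hy E.
  destruct (lt_eq_lt_dec (snd (f (unpair1 x))) (snd (f (unpair1 y)))) as [[K|K]|K].
  - pose proof (row_pos_lt_of_fst x y Hx Hy K). lia.
  - split.
    + apply f_inj; [apply (gamma_dom_inv A _ (proj1 Hx))|apply (gamma_dom_inv A _ (proj1 Hy))|].
      rewrite (proj1 (row_inv x Hx)), (proj1 (row_inv y Hy)), K. reflexivity.
    + unfold row_pos in E. rewrite K in E. lia.
  - pose proof (row_pos_lt_of_fst y x Hy Hx K). lia.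
Qed.

Lemma row_fibre_finite_preds x :
  row x -> exists l, forall y, row y -> row_pos y = row_pos x -> gamma_lt A y x -> In y l.
Proof.
  intros Hx. pose proof (gamma_dom_inv A x (proj1 Hx)) as (_ & Xa & Xb).
  exists (map (fun t => cpair (unpair1 x) (point (fst (f (unpair2 x)), t)))
              (seq 0 (snd (f (unpair2 x))))).
  intros y Hy Er Hyx. pose proof (gamma_dom_inv A y (proj1 Hy)) as (Ey & Ya & Yb).
  destruct (row_pos_eq y x Hy Hx Er) as [Ea Eb].
  destruct Hyx as [K|[_ K]]; [rewrite Ea in K; exfalso; exact (proj1 linear_A _ Xa K)|].
  apply f_lt in K; [|assumption..]. unfold lex in K. cbn in K.
  apply in_map_iff. exists (snd (f (unpair2 y))). split; [|apply in_seq; lia].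
  rewrite <- Eb, <- surjective_pairing, point_f, <- Ea by exact Yb. symmetry. exact Ey.
Qed.

Lemma row_infinite_fibres_cofinal n :
  exists m, n <= m /\ infinite_fibre nat row row_pos m.
Proof.
  (* Once the code [a] of [(i, j)] exceeds those of [(0, 0)] and [(1, 0)], every
     [(0, s + 1)] lies between these two, so the block of [a] starts with an
     infinite fibre. *)
  pose (c := point (0, 0)). pose (c' := point (1, 0)).
  destruct (inj_unbounded (fun t => point (i, n + t))) with (N := Nat.max c c') as [t Ht].
  { intros u v E%point_inj. injection E. lia. }
  set (a := point (i, n + t)) in Ht.
  exists (offset (n + t)). split; [pose proof (offset_ge (n + t)); lia|].
  intros l.
  destruct (not_inj_into_list (fun s => cpair a (point (0, S s)))) with (l := l) as [s Hs].
  { intros u v [_ E%point_inj]%cpair_inj. injection E. lia. }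
  exists (cpair a (point (0, S s))). split; [|split; [|exact Hs]].
  - split.
    + exists a, (point (0, S s)), c, c'. split; [reflexivity|split; [lia|split; [lia|]]].
      repeat split; try apply point_spec; apply point_lt; cbn; lia.
    + rewrite unpair1_cpair. unfold a. rewrite (proj2 (point_spec _)). reflexivity.
  - unfold row_pos. rewrite unpair1_cpair, unpair2_cpair. unfold a. rewrite !(proj2 (point_spec _)).
    cbn. lia.
Qed.

Lemma iso_row : iso_on row (gamma_lt A) omega2.
Proof.
  apply (iso_omega2_of_fibres nat row (gamma_lt A) row_pos).
  - apply (linear_on_sub (gamma_dom A)); [intros x []; assumption|exact (linear_gamma A linear_A)].
  - exact row_pos_mono.
  - exact row_fibre_finite_preds.
  - exact row_infinite_fibres_cofinal.
Qed.

End Row.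

Lemma iso_gamma_omega3 : iso_to (gamma_str A) omega3.
Proof.
  change (iso_on (gamma_dom A) (gamma_lt A) (omega_copies omega2)).
  apply (iso_omega_copies _ _ omega2 (fun x => fst (f (unpair1 x))) (linear_gamma A linear_A)).
  - intros x y (_ & Xa & _)%gamma_dom_inv (_ & Ya & _)%gamma_dom_inv [K|[E K]].
    + apply f_lt in K; [|assumption..]. unfold lex in K. cbn in K. lia.
    + rewrite E. reflexivity.
  - exact iso_row.
Qed.

End GammaOmega2.

(** * Reversal and isomorphism classes *)

Definition rev_str (S : Str) : Str := {| sdom := sdom S; slt := fun x y => slt S y x |}.

Definition agree (S1 S2 : Str) : Prop :=
  (forall x, sdom S1 x <-> sdom S2 x) /\
  (forall x y, sdom S1 x -> sdom S1 y -> (slt S1 x y <-> slt S2 x y)).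

Lemma agree_of_diag S1 S2 : (forall s, diag S1 s <-> diag S2 s) -> agree S1 S2.
Proof.
  intros H. assert (Hdom : forall x, sdom S1 x <-> sdom S2 x).
  { intros x. specialize (H (BPos (AEq x x))). cbn in H. tauto. }
  split; [exact Hdom|]. intros x y Hx Hy. specialize (H (BPos (ALt x y))).
  cbn in H. pose proof (proj1 (Hdom x) Hx). pose proof (proj1 (Hdom y) Hy). tauto.
Qed.

Lemma iso_to_agree S1 S2 L : agree S1 S2 -> iso_to S1 L -> iso_to S2 L.
Proof.
  intros [Hd Hl] (h & Honto & Hinj & Hlt). exists h. split; [|split].
  - intros p. destruct (Honto p) as (x & Hx & E). exists x. rewrite <- Hd. auto.
  - intros x y Hx Hy. apply Hinj; apply Hd; assumption.
  - intros x y Hx%Hd Hy%Hd. rewrite <- Hl; auto.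
Qed.

Lemma iso_to_rev S L : iso_to S L -> iso_to (rev_str S) (reverse L).
Proof.
  intros (h & Honto & Hinj & Hlt). exists h. split; [|split]; auto.
  intros x y Hx Hy. apply Hlt; auto.
Qed.

Lemma agree_rev_gamma_rev A : agree (rev_str (gamma_str (rev_str A))) (gamma_str A).
Proof.
  split.
  - intros x. cbn. split; intros (a & b & c & c' & H); exists a, b, c', c; tauto.
  - intros x y _ _. cbn. unfold gamma_lt. cbn. split; intros [H|[E H]]; auto.
Qed.

Lemma iso_gamma_omega3_rev A : iso_to A (reverse omega2) -> iso_to (gamma_str A) (reverse omega3).
Proof.
  intros (f & Honto & Hinj & Hlt).
  apply (iso_to_agree _ _ _ (agree_rev_gamma_rev A)), iso_to_rev.
  apply (iso_gamma_omega3 _ f); auto.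
  intros a b Ha Hb. apply (Hlt b a); assumption.
Qed.

Lemma str_iso_of_iso_to A B L : iso_to A L -> iso_to B L -> str_iso A B.
Proof.
  intros (fA & HAonto & HAinj & HAlt) (fB & HBonto & HBinj & HBlt).
  set (g x := epsilon (inhabits 0) (fun y => sdom B y /\ fB y = fA x)).
  assert (Hg : forall x, sdom B (g x) /\ fB (g x) = fA x) by (intros x; apply epsilon_spec, HBonto).
  exists g. split; [|split; [|split]].
  - intros x _. apply Hg.
  - intros y Hy. destruct (HAonto (fB y)) as (x & Hx & E). exists x. split; [exact Hx|].
    apply HBinj; [apply Hg|exact Hy|]. rewrite (proj2 (Hg x)). exact E.
  - intros x y Hx Hy E. apply HAinj; auto.
    rewrite <- (proj2 (Hg x)), <- (proj2 (Hg y)), E. reflexivity.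
  - intros x y Hx Hy. rewrite HAlt, HBlt by (auto; apply Hg).
    rewrite (proj2 (Hg x)), (proj2 (Hg y)). reflexivity.
Qed.

Lemma iso_to_of_str_iso A B L : str_iso A B -> iso_to A L -> iso_to B L.
Proof.
  intros (g & Gdom & Gonto & Ginj & Glt) (fA & HAonto & HAinj & HAlt).
  set (ginv y := epsilon (inhabits 0) (fun x => sdom A x /\ g x = y)).
  assert (Hginv : forall y, sdom B y -> sdom A (ginv y) /\ g (ginv y) = y)
    by (intros y Hy; apply epsilon_spec, Gonto, Hy).
  exists (fun y => fA (ginv y)). split; [|split].
  - intros p. destruct (HAonto p) as (x & Hx & <-). exists (g x). split; [auto|].
    f_equal. apply Ginj; [apply Hginv; auto|exact Hx|apply Hginv; auto].
  - intros y1 y2 H1 H2 E. apply HAinj in E; [|apply Hginv; auto..].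
    rewrite <- (proj2 (Hginv y1 H1)), <- (proj2 (Hginv y2 H2)), E. reflexivity.
  - intros y1 y2 H1 H2. rewrite <- HAlt, Glt by (apply Hginv; auto).
    rewrite (proj2 (Hginv y1 H1)), (proj2 (Hginv y2 H2)). reflexivity.
Qed.

(* The preimage of the least element of [L] would be greatest in [X]. *)
Lemma not_iso_to_both (L : OrdT) (z : car L) X :
  linear_on (fun _ => True) (olt L) ->
  (forall p, p <> z -> olt L z p) -> (forall p, exists q, olt L p q) ->
  iso_to X L -> iso_to X (reverse L) -> False.
Proof.
  intros (Lirr & Ltr & _) Hz Hnomax (f1 & S1 & I1 & O1) (f2 & S2 & I2 & O2).
  destruct (S1 z) as (x & Hx & Ex).
  destruct (Hnomax (f2 x)) as [q Hq]. destruct (S2 q) as (y & Hy & Ey).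
  assert (Hyx : y <> x) by (intros ->; rewrite Ey in Hq; exact (Lirr _ I Hq)).
  assert (Hxy : slt X x y).
  { apply O1; auto. rewrite Ex. apply Hz. intros E. apply Hyx, I1; congruence. }
  apply O2 in Hxy; auto. cbn in Hxy. rewrite Ey in Hxy.
  exact (Lirr _ I (Ltr _ _ _ I I I Hq Hxy)).
Qed.

Lemma linear_omega_copies Y :
  linear_on (fun _ => True) (olt Y) -> linear_on (fun _ => True) (olt (omega_copies Y)).
Proof.
  intros (Lirr & Ltr & Ltot). split; [|split]; cbn.
  - intros [a b] _ [H|[_ H]]; [lia|exact (Lirr _ I H)].
  - intros [a b] [c d] [e g] _ _ _ [H|[E H]] [H'|[E' H']]; cbn in *; try lia.
    right. split; [lia|eauto].
  - intros [a b] [c d] _ _. cbn. destruct (lt_eq_lt_dec a c) as [[H|<-]|H]; [tauto| |tauto].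
    destruct (Ltot b d I I) as [<-|[H|H]]; tauto.
Qed.

Lemma linear_omega3 : linear_on (fun _ => True) (olt omega3).
Proof. exact (linear_omega_copies omega2 linear_lex). Qed.

Lemma not_iso_to_omega2_both X : iso_to X omega2 -> iso_to X (reverse omega2) -> False.
Proof.
  apply (not_iso_to_both omega2 (0, 0) X linear_lex).
  - intros [[|a] [|b]] H; cbn; [congruence|lia..].
  - intros [a b]. exists (S a, 0). cbn. lia.
Qed.

Lemma not_iso_to_omega3_both X : iso_to X omega3 -> iso_to X (reverse omega3) -> False.
Proof.
  apply (not_iso_to_both omega3 (0, (0, 0)) X linear_omega3).
  - intros [[|a] [[|b] [|c]]] H; cbn; [congruence|lia..].
  - intros [a b]. exists (S a, (0, 0)). cbn. lia.
Qed.

Lemma class2_str_iso_iff L1 L2 A B :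
  (forall X, iso_to X L1 -> iso_to X L2 -> False) ->
  class2 L1 L2 A -> class2 L1 L2 B ->
  (str_iso A B <-> (iso_to A L1 <-> iso_to B L1)).
Proof.
  intros Hdisj HA HB. split.
  - intros HAB. split; [apply iso_to_of_str_iso; exact HAB|].
    intros HB1. destruct HA as [HA1|HA2]; [exact HA1|].
    exfalso. apply (Hdisj B HB1). exact (iso_to_of_str_iso A B L2 HAB HA2).
  - intros Hiff. destruct HA as [HA1|HA2].
    + exact (str_iso_of_iso_to A B L1 HA1 (proj1 Hiff HA1)).
    + destruct HB as [HB1|HB2]; [exfalso; exact (Hdisj A (proj2 Hiff HB1) HA2)|].
      exact (str_iso_of_iso_to A B L2 HA2 HB2).
Qed.

Lemma linear_reverse L :
  linear_on (fun _ => True) (olt L) -> linear_on (fun _ => True) (olt (reverse L)).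
Proof.
  intros (Lirr & Ltr & Ltot). split; [|split]; cbn.
  - exact Lirr.
  - intros x y z _ _ _ Hxy Hyz. exact (Ltr z y x I I I Hyz Hxy).
  - intros x y _ _. destruct (Ltot x y I I); tauto.
Qed.

Lemma linear_of_class A : class2 omega2 (reverse omega2) A -> linear_on (sdom A) (slt A).
Proof.
  intros [H|H]; apply (linear_on_iso _ _ _ H); [exact linear_lex|].
  apply linear_reverse, linear_lex.
Qed.

Lemma gamma_output_class A C :
  class2 omega2 (reverse omega2) A ->
  (forall s, apply_op gamma (diag A) s <-> diag C s) ->
  class2 omega3 (reverse omega3) C /\ (iso_to C omega3 <-> iso_to A omega2).
Proof.
  intros HA HC.
  assert (Hagree : agree (gamma_str A) C).
  { apply agree_of_diag. intros s. rewrite <- HC. symmetry.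
    apply apply_gamma_diag, linear_of_class, HA. }
  assert (H2 : iso_to A omega2 -> iso_to C omega3).
  { intros (f & Hf). apply (iso_to_agree _ _ _ Hagree), (iso_gamma_omega3 _ f); tauto. }
  assert (H2rev : iso_to A (reverse omega2) -> iso_to C (reverse omega3)).
  { intros H. apply (iso_to_agree _ _ _ Hagree), iso_gamma_omega3_rev, H. }
  split; [destruct HA; [left|right]; auto|].
  split; [|exact H2]. intros HC3. destruct HA as [HA|HA]; [exact HA|].
  exfalso. exact (not_iso_to_omega3_both C HC3 (H2rev HA)).
Qed.

Theorem theorem6p2 :
  comp_embeds (class2 omega2 (reverse omega2)) (class2 omega3 (reverse omega3)).
Proof.
  exists gamma. split; [exact is_ce_op_gamma|split].
  - intros A HA. exists (gamma_str A).
    assert (Hdiag := apply_gamma_diag A (linear_of_class A HA)).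
    split; [exact (proj1 (gamma_output_class A _ HA Hdiag))|exact Hdiag].
  - intros A B C D HA HB HC HD.
    destruct (gamma_output_class A C HA HC) as [HC3 EC].
    destruct (gamma_output_class B D HB HD) as [HD3 ED].
    rewrite (class2_str_iso_iff _ _ A B not_iso_to_omega2_both HA HB),
      (class2_str_iso_iff _ _ C D not_iso_to_omega3_both HC3 HD3), EC, ED.
    reflexivity.
Qed.
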